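(* Let $M$ be a $2$-torsion free $k$-algebra. Let $E$ be the set of idempotent anti-pre-endomorphisms of $M$, i.e. $k$-linear maps $e\colon M\to M$ with $e\circ e=e$ that are anti-pre-morphisms, and let $P$ be the set of pairs $(K,B)$ of $k$-submodules of $M$ such that $M=K\oplus B$ as $k$-modules, $xy-yx\in K$ for all $x,y\in M$, and $bb'=b'b$ for all $b,b'\in B$. Then $e\mapsto(\ker(e),e(M))$ is a bijection $E\to P$ (with inverse sending $(K,B)$ to the projection of $M=K\oplus B$ onto $B$ along $K$, viewed as an endomorphism of $M$).
   Context: $k$ is a commutative ring with identity; a $k$-algebra is a $k$-module with a $k$-bilinear, not necessarily associative, product. $M$ is $2$-torsion free if $x+x=0$ implies $x=0$. A $k$-linear map $\varphi$ is an anti-pre-morphism if $\varphi(xy)+\varphi(x)\varphi(y)=\varphi(yx)+\varphi(y)\varphi(x)$ for all $x,y$. *)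

From HB Require Import structures.
From mathcomp Require Import all_boot all_order all_algebra.
Set Implicit Arguments. Unset Strict Implicit. Unset Printing Implicit Defensive.
Import GRing.Theory.
Local Open Scope ring_scope.

(* A (not necessarily associative) k-algebra structure on the k-module M is a
   k-bilinear product mul : M -> M -> M. *)
Definition bilinear_product (k : comPzRingType) (M : lmodType k)
  (mul : M -> M -> M) : Prop :=
  (forall x (a : k) y z, mul x (a *: y + z) = a *: mul x y + mul x z) /\
  (forall y (a : k) x z, mul (a *: x + z) y = a *: mul x y + mul z y).

Definition two_torsion_free (k : comPzRingType) (M : lmodType k) : Prop :=
  forall x : M, x + x = 0 -> x = 0.

Definition anti_pre_morphism (k : comPzRingType) (M : lmodType k)
  (mul : M -> M -> M) (phi : M -> M) : Prop :=
  forall x y, phi (mul x y) + mul (phi x) (phi y)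
              = phi (mul y x) + mul (phi y) (phi x).

Definition idem_anti_pre_endo (k : comPzRingType) (M : lmodType k)
  (mul : M -> M -> M) (e : {linear M -> M}) : Prop :=
  (forall x, e (e x) = e x) /\ anti_pre_morphism mul e.

Definition submodule (k : comPzRingType) (M : lmodType k) (S : M -> Prop) : Prop :=
  S 0 /\ (forall x y, S x -> S y -> S (x + y)) /\
  (forall (a : k) x, S x -> S (a *: x)).

Definition direct_sum (k : comPzRingType) (M : lmodType k) (K B : M -> Prop) : Prop :=
  (forall x : M, exists a b, K a /\ B b /\ x = a + b) /\
  (forall x : M, K x -> B x -> x = 0).

Definition pair_P (k : comPzRingType) (M : lmodType k) (mul : M -> M -> M)
  (K B : M -> Prop) : Prop :=
  [/\ submodule K, submodule B, direct_sum K B,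
      (forall x y, K (mul x y - mul y x)) &
      (forall b b', B b -> B b' -> mul b b' = mul b' b)].

Definition ker_set (k : comPzRingType) (M : lmodType k) (e : M -> M) : M -> Prop :=
  fun x => e x = 0.

Definition img_set (k : comPzRingType) (M : lmodType k) (e : M -> M) : M -> Prop :=
  fun y => exists x, e x = y.

From HB Require Import structures.
From mathcomp Require Import all_boot all_order all_algebra.
From Stdlib Require Import ClassicalEpsilon.
Set Implicit Arguments. Unset Strict Implicit.
Import GRing.Theory.
Local Open Scope ring_scope.

(* The map e |-> (ker e, e(M)) is analysed through three facts.
   1. For an idempotent linear e, M = ker e (+) e(M) (write x = (x - e x) + e x),
      and two idempotent linear maps with the same kernel and image coincide;
      this gives the decomposition part of P and injectivity.
   2. If e is moreover an anti-pre-morphism, then for u, v in e(M) the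
      commutator c = uv - vu satisfies e c = -c; idempotency then gives
      c + c = 0, so c = 0 by 2-torsion freeness: e(M) is commutative.
      Plugging this back into the anti-pre-morphism identity shows that
      e kills every commutator xy - yx.
   3. Conversely, for (K, B) in P the projection onto B along K (defined by
      choice, linear by uniqueness of the decomposition) is idempotent with
      kernel K and image B, and it is an anti-pre-morphism because it kills
      the commutator xy - yx and B is commutative. *)

Lemma submoduleN (k : comPzRingType) (M : lmodType k) (S : M -> Prop) :
  submodule S -> forall x, S x -> S (- x).
Proof. by move=> [_ [_ SZ]] x /(SZ (-1)); rewrite scaleN1r. Qed.

Lemma submoduleB (k : comPzRingType) (M : lmodType k) (S : M -> Prop) :
  submodule S -> forall x y, S x -> S y -> S (x - y).
Proof. by move=> HS x y Sx Sy; apply: HS.2.1 => //; apply: submoduleN. Qed.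

Lemma ker_submodule (k : comPzRingType) (M : lmodType k) (e : {linear M -> M}) :
  submodule (ker_set e).
Proof.
rewrite /ker_set; split; first exact: linear0.
split; first by move=> x y; rewrite linearD => -> ->; rewrite addr0.
by move=> a x; rewrite linearZZ => ->; rewrite scaler0.
Qed.

Lemma img_submodule (k : comPzRingType) (M : lmodType k) (e : {linear M -> M}) :
  submodule (img_set e).
Proof.
split; first by exists 0; rewrite linear0.
split; first by move=> _ _ [x <-] [y <-]; exists (x + y); rewrite linearD.
by move=> a _ [x <-]; exists (a *: x); rewrite linearZZ.
Qed.

Section Projection.
Variables (k : comPzRingType) (M : lmodType k) (K B : M -> Prop).
Hypotheses (HK : submodule K) (HB : submodule B) (HD : direct_sum K B).

Lemma direct_sum_unique a b a' b' :
  K a -> B b -> K a' -> B b' -> a + b = a' + b' -> b = b'.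
Proof.
move=> Ka Bb Ka' Bb' E; apply/eqP; rewrite -subr_eq0; apply/eqP.
apply: HD.2; last exact: submoduleB.
have -> : b - b' = a' - a by apply/eqP; rewrite subr_eq addrAC -E addrC addKr.
exact: submoduleB.
Qed.

Definition proj_along (x : M) : M :=
  epsilon (inhabits 0) (fun b => exists a, K a /\ B b /\ x = a + b).

Lemma proj_alongE a b : K a -> B b -> proj_along (a + b) = b.
Proof.
move=> Ka Bb; rewrite /proj_along.
set P := fun b' => _.
have [a' [Ka' [Bb' E]]] : P (epsilon (inhabits 0) P).
  by apply: epsilon_spec; exists b, a.
by apply: (direct_sum_unique Ka' Bb' Ka Bb); rewrite -E.
Qed.

Lemma proj_along_B x : B (proj_along x).
Proof. by have [a [b [Ka [Bb ->]]]] := HD.1 x; rewrite proj_alongE. Qed.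

Lemma proj_along_linear : linear proj_along.
Proof.
move=> c x y.
have [a [b [Ka [Bb ->]]]] := HD.1 x.
have [a' [b' [Ka' [Bb' ->]]]] := HD.1 y.
have -> : c *: (a + b) + (a' + b') = (c *: a + a') + (c *: b + b').
  by rewrite scalerDr addrACA.
rewrite !proj_alongE //.
- by apply: HK.2.1 => //; apply: HK.2.2.
- by apply: HB.2.1 => //; apply: HB.2.2.
Qed.

End Projection.

Definition proj_lin (k : comPzRingType) (M : lmodType k) (K B : M -> Prop)
  (HK : submodule K) (HB : submodule B) (HD : direct_sum K B) : {linear M -> M} :=
  HB.pack_for {linear M -> M} (proj_along K B)
    (GRing.isLinear.Build k M M *:%R (proj_along K B) (proj_along_linear HK HB HD)).

Section Idempotent.
Variables (k : comPzRingType) (M : lmodType k).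

Lemma idem_direct_sum (e : {linear M -> M}) :
  (forall x, e (e x) = e x) -> direct_sum (ker_set e) (img_set e).
Proof.
move=> eid; split.
  move=> x; exists (x - e x), (e x); split; last split.
  - by rewrite /ker_set linearB eid subrr.
  - by exists x.
  - by rewrite subrK.
by move=> z ez0 [y ey]; rewrite -ey -eid ey.
Qed.

Lemma idem_eq_of_ker_img (e1 e2 : {linear M -> M}) :
  (forall x, e1 (e1 x) = e1 x) -> (forall x, e2 (e2 x) = e2 x) ->
  (forall x, ker_set e1 x <-> ker_set e2 x) ->
  (forall x, img_set e1 x <-> img_set e2 x) -> e1 =1 e2.
Proof.
move=> eid1 eid2 Hker Himg x.
have kx : e2 (x - e1 x) = 0 by apply/Hker; rewrite /ker_set linearB eid1 subrr.
have [y e2y] : img_set e2 (e1 x) by apply/Himg; exists x.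
by move/eqP: kx; rewrite linearB -e2y eid2 e2y subr_eq0 => /eqP.
Qed.

Variable mul : M -> M -> M.
Hypothesis H2 : two_torsion_free M.
Variable e : {linear M -> M}.
Hypotheses (eid : forall x, e (e x) = e x) (eanti : anti_pre_morphism mul e).

(* The image of an idempotent anti-pre-endomorphism is commutative: the
   commutator c of two fixed points satisfies e c = - c, hence c = - c. *)
Lemma idem_anti_img_comm b b' : img_set e b -> img_set e b' -> mul b b' = mul b' b.
Proof.
move=> [x <-] [y <-]; set u := e x; set v := e y.
have eu : e u = u by apply: eid.
have ev : e v = v by apply: eid.
set c := mul u v - mul v u.
have ec : e c = - c.
  have := eanti u v; rewrite eu ev => anti_uv.
  rewrite /c linearB opprB -[e (mul u v)](addrK (mul u v)) anti_uv.
  by rewrite addrAC [e _ + _]addrC addrK.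
have cc : c + c = 0.
  have : e (e c) = e c := eid c.
  by rewrite ec linearN ec opprK => cN; rewrite {2}cN subrr.
by apply/eqP; rewrite -subr_eq0; apply/eqP/H2.
Qed.

Lemma idem_anti_ker_comm x y : ker_set e (mul x y - mul y x).
Proof.
rewrite /ker_set linearB; apply/eqP; rewrite subr_eq0; apply/eqP.
have := eanti x y.
by rewrite (@idem_anti_img_comm (e x) (e y)); [move=> /addIr | exists x | exists y].
Qed.

Lemma idem_anti_pair_P : pair_P mul (ker_set e) (img_set e).
Proof.
split.
- exact: ker_submodule.
- exact: img_submodule.
- exact: idem_direct_sum.
- exact: idem_anti_ker_comm.
- exact: idem_anti_img_comm.
Qed.

End Idempotent.

Lemma proj_along_realizes (k : comPzRingType) (M : lmodType k)
  (mul : M -> M -> M) (K B : M -> Prop) :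
  pair_P mul K B ->
  exists e : {linear M -> M}, [/\ idem_anti_pre_endo mul e,
    (forall x, ker_set e x <-> K x), (forall x, img_set e x <-> B x) &
    (forall a b, K a -> B b -> e (a + b) = b)].
Proof.
move=> [HK HB HD Kcomm Bcomm].
pose e := proj_lin HK HB HD.
have eE a b : K a -> B b -> e (a + b) = b by exact: proj_alongE.
have eK a : K a -> e a = 0 by move=> Ka; rewrite -[a]addr0 eE //; apply: HB.1.
have eMB x : B (e x) by exact: proj_along_B.
have eB b : B b -> e b = b by move=> Bb; rewrite -{1}[b]add0r eE //; apply: HK.1.
exists e; split => //.
- split=> [x | x y]; first exact/eB.
  rewrite -[mul x y](subrK (mul y x)) linearD (eK _ (Kcomm x y)) add0r.
  by rewrite (Bcomm _ _ (eMB x) (eMB y)).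
- move=> x; split=> [ex0 | /eK //].
  have [a [b [Ka [Bb xE]]]] := HD.1 x.
  by move: ex0; rewrite /ker_set xE eE // => ->; rewrite addr0.
- by move=> y; split=> [[x <-] // | By]; exists y; apply: eB.
Qed.

Theorem theorem5p3 (k : comPzRingType) (M : lmodType k) (mul : M -> M -> M)
  (Hmul : bilinear_product mul) (H2 : two_torsion_free M) :
  (* the map e |-> (ker e, e(M)) sends E into P *)
  (forall e : {linear M -> M}, idem_anti_pre_endo mul e ->
     pair_P mul (ker_set e) (img_set e)) /\
  (* it is injective on E *)
  (forall e1 e2 : {linear M -> M},
     idem_anti_pre_endo mul e1 -> idem_anti_pre_endo mul e2 ->
     (forall x, ker_set e1 x <-> ker_set e2 x) ->
     (forall x, img_set e1 x <-> img_set e2 x) -> e1 =1 e2) /\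
  (* it is surjective onto P, the preimage being the projection onto B along K *)
  (forall K B : M -> Prop, pair_P mul K B ->
     exists e : {linear M -> M}, [/\ idem_anti_pre_endo mul e,
       (forall x, ker_set e x <-> K x), (forall x, img_set e x <-> B x) &
       (forall a b, K a -> B b -> e (a + b) = b)]).
Proof.
split; first by move=> e [eid eanti]; apply: idem_anti_pair_P.
split; last exact: proj_along_realizes.
by move=> e1 e2 [eid1 _] [eid2 _]; apply: idem_eq_of_ker_img.
Qed.
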